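(* Let $r\geq1$ be an integer, $(a_{\boldsymbol n})\in\mathbf C^{\mathbf N^r}$ and $\rho>0$ real. Suppose there is $\varepsilon>0$ such that the series $F(\boldsymbol z)=\prod_i(1-\rho z_i)\sum_{\boldsymbol n\in\mathbf N^r}a_{\boldsymbol n}\prod_iz_i^{n_i}$ converges absolutely on the domain $|z_i|\leq\rho^{-1}+\varepsilon$ ($i=1,\dots,r$). Let $\|F\|_{\rho^{-1}}=\max_{|\eta_i|=1}|F((\eta_i\rho^{-1})_i)|$. Then for all $\boldsymbol n\in\mathbf N^r$, $$|a_{\boldsymbol n}|\leq\prod_i(n_i+1)\,\|F\|_{\rho^{-1}}\,\rho^{\sum_in_i}.$$ *)

From mathcomp Require Import all_boot all_order all_algebra complex.
From mathcomp Require Import all_classical all_reals all_analysis.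
Import Order.TTheory GRing.Theory Num.Theory numFieldNormedType.Exports.
Local Open Scope ring_scope.
Local Open Scope complex_scope.

Set Implicit Arguments.
Unset Strict Implicit.
Unset Printing Implicit Defensive.

Section Defs.
Variable R : realType.
Local Notation C := R[i].
Variable r : nat.

Definition cabs (z : C) : R := Num.sqrt (@complex.Re R z ^+ 2 + @complex.Im R z ^+ 2).

Definition mono (z : 'I_r -> C) (n : 'I_r -> nat) : C := \prod_i z i ^+ n i.

Definition idxsum (n : 'I_r -> nat) : nat := (\sum_i n i)%N.

(* Coefficients of the power series
   F(z) = prod_i (1 - rho z_i) * sum_n a_n z^n, obtained by expanding the
   finite product: for each subset S of coordinates, the factor (-rho z_i)
   for i in S shifts the index n_i down by one. *)
Definition Fcoef (rho : R) (a : ('I_r -> nat) -> C) (n : 'I_r -> nat) : C :=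
  \sum_(S : {set 'I_r} | [forall i in S, 0 < n i]%N)
     (- rho%:C) ^+ #|S| * a (fun i => if i \in S then (n i).-1 else n i).

Definition Fpartial (rho : R) (a : ('I_r -> nat) -> C) (z : 'I_r -> C)
    (N : nat) : C :=
  \sum_(m : {ffun 'I_r -> 'I_N.+1})
     Fcoef rho a (fun i => nat_of_ord (m i)) * mono z (fun i => nat_of_ord (m i)).

Definition Fabspartial (rho : R) (a : ('I_r -> nat) -> C) (z : 'I_r -> C)
    (N : nat) : R :=
  \sum_(m : {ffun 'I_r -> 'I_N.+1})
     cabs (Fcoef rho a (fun i => nat_of_ord (m i))) *
     \prod_i cabs (z i) ^+ nat_of_ord (m i).

(* absolute convergence of the series of F at z: the (nonnegative) terms
   |b_n z^n| are summable over N^r, i.e. the box partial sums are bounded *)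
Definition F_abs_conv (rho : R) (a : ('I_r -> nat) -> C) (z : 'I_r -> C) : Prop :=
  exists M : R, forall N, Fabspartial rho a z N <= M.

Definition Fval (rho : R) (a : ('I_r -> nat) -> C) (z : 'I_r -> C) : C :=
  (limn (fun N => @complex.Re R (Fpartial rho a z N)))
    +i* (limn (fun N => @complex.Im R (Fpartial rho a z N))).

Definition Fnorm (rho : R) (a : ('I_r -> nat) -> C) : R :=
  sup [set x : R | exists eta : 'I_r -> C,
         (forall i, cabs (eta i) = 1) /\
         x = cabs (Fval rho a (fun i => eta i * (rho^-1)%:C))].

End Defs.

From mathcomp Require Import all_boot all_order all_algebra complex.
From mathcomp Require Import all_classical all_reals all_analysis.
From mathcomp Require Import ring lra zify.
From mathcomp Require Import cyclic separable cyclotomic.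
Import Order.TTheory GRing.Theory Num.Theory.
Import numFieldNormedType.Exports.
Local Open Scope ring_scope.
Local Open Scope complex_scope.

Set Implicit Arguments.
Unset Strict Implicit.
Unset Printing Implicit Defensive.

(* Write b for the coefficients of F.  Inverting the factor prod_i (1 - rho z_i)
   coefficientwise gives a_n = sum_(k <= n) rho^(|n| - |k|) b_k, so it suffices to
   prove the Cauchy estimate |b_m| <= ||F|| rho^|m|, the box k <= n having
   prod_i (n_i + 1) points.  Averaging F z^(-m) over the points of the torus
   |z_i| = 1/rho whose arguments are K-th roots of unity isolates the coefficients
   b_m' with m' = m mod K.  Every such m' <> m has |m'| >= K, so absolute convergence
   on the torus of radius 1/rho + eps bounds their contribution by M q^K with
   q = (1/rho) / (1/rho + eps) < 1, and K -> oo gives the estimate. *)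

Section ComplexModulus.
Variable R : realType.
Implicit Types (x y z : R[i]) (c : R).

Lemma cabsE z : (cabs z)%:C = `|z|.
Proof. by rewrite normc_def. Qed.

Lemma cabs_ge0 z : 0 <= cabs z.
Proof. exact: sqrtr_ge0. Qed.

Lemma cabs_real c : cabs c%:C = `|c|.
Proof. by rewrite /cabs /= expr0n /= addr0 sqrtr_sqr. Qed.

Lemma cabs_nat n : cabs (n%:R : R[i]) = n%:R.
Proof. by rewrite -(rmorph_nat (real_complex R)) cabs_real normr_nat. Qed.

Lemma cabsM x y : cabs (x * y) = cabs x * cabs y.
Proof. by apply: complexI; rewrite rmorphM /= !cabsE normrM. Qed.

Lemma cabsX x n : cabs (x ^+ n) = cabs x ^+ n.
Proof. by apply: complexI; rewrite rmorphXn /= !cabsE normrX. Qed.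

Lemma cabsN x : cabs (- x) = cabs x.
Proof. by apply: complexI; rewrite !cabsE normrN. Qed.

Lemma ler_cabsD x y : cabs (x + y) <= cabs x + cabs y.
Proof. by rewrite -lecR rmorphD /= !cabsE ler_normD. Qed.

Lemma ler_cabs_sum (I : Type) (s : seq I) (P : pred I) (F : I -> R[i]) :
  cabs (\sum_(i <- s | P i) F i) <= \sum_(i <- s | P i) cabs (F i).
Proof.
rewrite -lecR rmorph_sum cabsE (eq_bigr _ (fun i _ => cabsE (F i))).
exact: ler_norm_sum.
Qed.

Lemma cabs_prod (I : Type) (s : seq I) (P : pred I) (F : I -> R[i]) :
  cabs (\prod_(i <- s | P i) F i) = \prod_(i <- s | P i) cabs (F i).
Proof.
apply: complexI; rewrite rmorph_prod /= cabsE normr_prod.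
by apply: eq_bigr => i _; rewrite cabsE.
Qed.

Lemma ler_norm_Re_cabs z : `|complex.Re z| <= cabs z.
Proof. by rewrite -sqrtr_sqr ler_wsqrtr // lerDl sqr_ge0. Qed.

Lemma ler_norm_Im_cabs z : `|complex.Im z| <= cabs z.
Proof. by rewrite -sqrtr_sqr ler_wsqrtr // lerDr sqr_ge0. Qed.

End ComplexModulus.

Lemma closed_prim_root_exists (C : numClosedFieldType) n :
  (0 < n)%N -> exists z : C, n.-primitive_root z.
Proof.
move=> n_gt0; pose p : {poly C} := 'X^n - 1.
have [rs Dp] := closed_field_poly_normal p.
rewrite (monicP _) ?monicXnsubC // scale1r in Dp.
have rn1 : all n.-unity_root rs by apply/allP=> z; rewrite -root_prod_XsubC -Dp.
have sz_r : (n < (size rs).+1)%N.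
  by rewrite -(size_prod_XsubC rs id) -Dp size_XnsubC.
have [|z] := hasP (has_prim_root n_gt0 rn1 _ sz_r); last by exists z.
by rewrite -separable_prod_XsubC -Dp separable_Xn_sub_1 // pnatr_eq0 -lt0n.
Qed.

Lemma sum_subset_sign (R : comNzRingType) (T : finType) (A : {set T}) :
  \sum_(S : {set T} | S \subset A) (-1 : R) ^+ #|S| = (A == finset.set0)%:R.
Proof.
have sign_prod (S : {set T}) :
    \prod_i (if i \in S then - (i \in A)%:R else 1) = (S \subset A)%:R * (-1 : R) ^+ #|S|.
  rewrite -big_mkcond /=; case: (boolP (S \subset A)) => [SA|].
    by rewrite mul1r -prodr_const; apply: eq_bigr => i /(fintype.subsetP SA) ->.
  case/fintype.subsetPn => i iS iNA.
  by rewrite mul0r (bigD1 i) //= (negbTE iNA) oppr0 mul0r.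
transitivity (\prod_(i : T) (- (i \in A)%:R + 1 : R)).
  rewrite bigA_distr big_mkcond; apply: eq_bigr => S _.
  by rewrite sign_prod; case: (S \subset A); rewrite ?mul1r ?mul0r.
have [->|/finset.set0Pn [i iA]] := eqVneq A finset.set0.
  by rewrite big1 // => i _; rewrite finset.in_set0 oppr0 add0r.
by rewrite (bigD1 i) //= iA addNr mul0r.
Qed.

Notation natf k := (fun i => nat_of_ord (k i)).

Lemma inordE L m : ((inord m : 'I_L.+1) : nat) = if (m <= L)%N then m else 0%N.
Proof. by rewrite /inord val_insubd. Qed.

Lemma sum_in_set (T : finType) (S : {set T}) : (\sum_i (i \in S))%N = #|S|.
Proof. by rewrite -sum1_card [RHS]big_mkcond; apply: eq_bigr => i _; case: (i \in S). Qed.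

Lemma idxsum_shift r (m : 'I_r -> nat) (S : {set 'I_r}) :
  idxsum (fun i => m i + (i \in S))%N = (idxsum m + #|S|)%N.
Proof. by rewrite /idxsum big_split sum_in_set. Qed.

Section Inversion.
Variable R : realType.
Variables (r L : nat) (n : 'I_r -> nat).
Hypothesis n_le_L : forall i, (n i <= L)%N.
Local Notation box := {ffun 'I_r -> 'I_L.+1}.

Definition below (k : box) := [forall i, k i <= n i]%N.

(* [Fcoef] writes b_k as a sum over the sets S with k > 0 on S of (-rho)^|S| a_(k - 1_S);
   the substitution j = k - 1_S maps the pairs (S, k) with [shift_dom S k] bijectively
   onto the pairs (S, j) with [shift_codom S j], i.e. j + 1_S <= n. *)
Definition shift_dom (S : {set 'I_r}) (k : box) := below k && [forall i in S, 0 < k i]%N.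
Definition shift_codom (S : {set 'I_r}) (j : box) :=
  below j && [forall i in S, j i < n i]%N.

Definition shift_up (S : {set 'I_r}) (k : box) : box :=
  [ffun i => inord (k i + (i \in S))].
Definition shift_down (S : {set 'I_r}) (k : box) : box :=
  [ffun i => inord (k i - (i \in S))].

Lemma shift_codom_le S j : shift_codom S j -> forall i, (j i + (i \in S) <= n i)%N.
Proof.
case/andP => /forallP j_le /forall_inP j_lt i.
by case: (boolP (i \in S)) => iS /=; [have := j_lt i iS | have := j_le i]; lia.
Qed.

Lemma shift_upE S j :
  shift_codom S j -> forall i, shift_up S j i = (j i + (i \in S))%N :> nat.
Proof.
move=> /shift_codom_le jS i; rewrite ffunE inordE.
by have := jS i; have := n_le_L i; case: (i \in S) => /=; case: ifP; lia.
Qed.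

Lemma shift_dom_up S j :
  shift_dom S (shift_up S j) && (shift_down S (shift_up S j) == j) = shift_codom S j.
Proof.
apply/idP/idP => [/andP [/andP [/forallP up_le /forall_inP up_gt0] _] | jS].
  apply/andP; split; last first.
    apply/forall_inP => i iS; have := up_le i; have := up_gt0 i iS.
    by rewrite ffunE inordE iS; case: ifP; lia.
  apply/forallP => i; have := up_le i; rewrite ffunE inordE.
  by case: (boolP (i \in S)) => iS; [have := up_gt0 i iS | have := ltn_ord (j i)];
    rewrite ?ffunE ?inordE ?iS; case: ifP; lia.
have up := shift_upE jS; case/andP: jS => /forallP j_le /forall_inP j_lt.
apply/andP; split; first (apply/andP; split).
- by apply/forallP => i; rewrite up; case: (boolP (i \in S)) => iS;
    [have := j_lt i iS | have := j_le i]; lia.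
- by apply/forall_inP => i iS; rewrite up iS; lia.
- apply/eqP/ffunP => i; apply: val_inj => /=.
  by rewrite ffunE inordE up addnK -ltnS ltn_ord.
Qed.

Lemma shift_up_down S k : shift_dom S k -> shift_up S (shift_down S k) = k.
Proof.
case/andP => _ /forall_inP k_gt0; apply/ffunP => i; apply: val_inj => /=.
rewrite !ffunE !inordE; have := ltn_ord (k i).
by case: (boolP (i \in S)) => iS; [have := k_gt0 i iS|]; case: ifP => /=; case: ifP; lia.
Qed.

Lemma reindex_shift (V : zmodType) S (G : ('I_r -> nat) -> ('I_r -> nat) -> V) :
  \sum_(k | shift_dom S k) G (natf k) (fun i => if i \in S then (k i).-1 else k i) =
  \sum_(j | shift_codom S j) G (fun i => j i + (i \in S))%N (natf j).
Proof.
rewrite (reindex_onto (shift_up S) (shift_down S)) => [|k]; last exact: shift_up_down.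
apply: eq_big => j; first exact: shift_dom_up.
rewrite shift_dom_up => jS; congr G; apply: funext => i; rewrite shift_upE //.
by case: (i \in S); rewrite ?addn1 ?addn0.
Qed.

Variables (a : ('I_r -> nat) -> R[i]) (rho : R).

Lemma Fcoef_inversion :
  a n = \sum_(k | below k) rho%:C ^+ (idxsum n - idxsum (natf k)) * Fcoef rho a (natf k).
Proof.
pose X (j : 'I_r -> nat) := rho%:C ^+ (idxsum n - idxsum j) * a j.
symmetry; transitivity
  (\sum_(S : {set 'I_r}) \sum_(j | shift_codom S j) (-1) ^+ #|S| * X (natf j)).
  rewrite /Fcoef; under eq_bigr do rewrite big_distrr /=.
  rewrite (exchange_big_dep predT) //=; apply: eq_bigr => S _.
  rewrite (reindex_shift S (fun m m' => rho%:C ^+ (idxsum n - idxsum m) *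
                                     ((- rho%:C) ^+ #|S| * a m'))).
  apply: eq_bigr => j jS; rewrite idxsum_shift.
  have jS_le : (idxsum (natf j) + #|S| <= idxsum n)%N.
    by rewrite -idxsum_shift; apply: leq_sum => i _; exact: shift_codom_le.
  rewrite /X; have -> : (idxsum n - idxsum (natf j) =
                         idxsum n - (idxsum (natf j) + #|S|) + #|S|)%N by lia.
  by rewrite exprD (exprNn rho%:C); ring.
rewrite (exchange_big_dep below) => [|S j _ /andP []//] /=.
transitivity (\sum_(j | below j) X (natf j) * ([set i | j i < n i]%N == finset.set0)%:R).
  apply: eq_bigr => j j_le; rewrite -sum_subset_sign mulr_sumr.
  apply: eq_big => [S|S _]; last by rewrite mulrC.
  rewrite /shift_codom j_le; apply/forall_inP/fintype.subsetP => j_lt i /j_lt.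
    by rewrite finset.inE.
  by rewrite finset.inE.
pose n0 : box := [ffun i => inord (n i)].
have n0E i : n0 i = n i :> nat by rewrite ffunE inordE n_le_L.
have below_n0 : below n0 by apply/forallP => i; rewrite n0E.
rewrite (bigD1 n0) //= big1 => [|j /andP [j_le j_neq]].
  have -> : [set i | n0 i < n i]%N = finset.set0.
    by apply/finset.setP => i; rewrite finset.inE finset.in_set0 n0E ltnn.
  have -> : natf n0 = n by apply: funext => i; exact: n0E.
  by rewrite /X subnn expr0 mul1r eqxx mulr1 addr0.
suff /negbTE -> : [set i | j i < n i]%N != finset.set0 by rewrite mulr0.
apply: contra j_neq => /eqP A0; apply/eqP/ffunP => i; apply: val_inj => /=.
have : i \notin [set i | j i < n i]%N by rewrite A0 finset.in_set0.
by rewrite finset.inE n0E; have := forallP j_le i; lia.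
Qed.

End Inversion.

Lemma big_box_widen (V : zmodType) r (T : ('I_r -> nat) -> V) N L : (N <= L)%N ->
  \sum_(m : {ffun 'I_r -> 'I_N.+1}) T (natf m) =
  \sum_(m : {ffun 'I_r -> 'I_L.+1} | [forall i, m i <= N]%N) T (natf m).
Proof.
move=> N_le_L; pose widen (m : {ffun 'I_r -> 'I_N.+1}) : {ffun 'I_r -> 'I_L.+1} :=
  [ffun i => widen_ord (N_le_L : (N.+1 <= L.+1)%N) (m i)].
pose narrow (m : {ffun 'I_r -> 'I_L.+1}) : {ffun 'I_r -> 'I_N.+1} :=
  [ffun i => inord (m i)].
symmetry; rewrite (reindex_onto widen narrow) => [|m /forallP m_le]; last first.
  by apply/ffunP => i; apply: val_inj; rewrite /= !ffunE /= inordE m_le.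
have widenE m i : widen m i = m i :> nat by rewrite ffunE.
apply: eq_big => [m | m _]; last by congr T; apply: funext => i; exact: widenE.
have -> : [forall i, widen m i <= N]%N by apply/forallP => i; rewrite widenE -ltnS.
by apply/eqP/ffunP => i; apply: val_inj; rewrite /= !ffunE /= inordE -ltnS ltn_ord.
Qed.

Lemma sum_box_increment (V : zmodType) r (T : ('I_r -> nat) -> V) N N' : (N <= N')%N ->
  \sum_(m : {ffun 'I_r -> 'I_N'.+1}) T (natf m) -
  \sum_(m : {ffun 'I_r -> 'I_N.+1}) T (natf m) =
  \sum_(m : {ffun 'I_r -> 'I_N'.+1} | ~~ [forall i, m i <= N]%N) T (natf m).
Proof.
move=> N_le; rewrite (big_box_widen T N_le).
rewrite (bigID (fun m : {ffun 'I_r -> 'I_N'.+1} => [forall i, m i <= N]%N)) /=.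
by rewrite addrAC subrr add0r.
Qed.

Lemma cvgn_dominated_increments (R : realType) (x s : R ^nat) M :
  nondecreasing_seq s -> (forall N, s N <= M) ->
  (forall N N', (N <= N')%N -> `|x N' - x N| <= s N' - s N) -> cvgn x.
Proof.
move=> s_nd s_le_M dx; pose xs N := x N + s N.
have xs_nd : nondecreasing_seq xs.
  by move=> N N' /dx; rewrite ler_norml /xs => /andP [+ _]; lra.
have xs_ub : has_ubound (range xs).
  exists (x 0%N - s 0%N + M + M) => _ [N _ <-]; rewrite /xs.
  have := dx 0%N N (leq0n N); rewrite ler_norml => /andP [_].
  by have := s_le_M N; have := s_nd 0%N N (leq0n N); lra.
have -> : x = xs - s by apply: funext => N; rewrite /xs /= addrK.
apply: is_cvgB; first exact: nondecreasing_is_cvgn.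
by apply: nondecreasing_is_cvgn => //; exists M => _ [N _ <-].
Qed.

Section PartialSums.
Variables (R : realType) (r : nat) (a : ('I_r -> nat) -> R[i]) (rho : R).
Implicit Types (z : 'I_r -> R[i]) (N : nat).

Lemma cabs_Fterm z m :
  cabs (Fcoef rho a m * mono z m) = cabs (Fcoef rho a m) * \prod_i cabs (z i) ^+ m i.
Proof. by rewrite cabsM cabs_prod; under eq_bigr do rewrite cabsX. Qed.

Lemma cabs_Fpartial_le z N : cabs (Fpartial rho a z N) <= Fabspartial rho a z N.
Proof. by apply: le_trans (ler_cabs_sum _ _ _) _; under eq_bigr do rewrite cabs_Fterm. Qed.

Lemma cabs_Fpartial_increment_le z N N' : (N <= N')%N ->
  cabs (Fpartial rho a z N' - Fpartial rho a z N) <=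
  Fabspartial rho a z N' - Fabspartial rho a z N.
Proof.
move=> N_le; rewrite /Fpartial /Fabspartial.
rewrite (sum_box_increment (fun m => Fcoef rho a m * mono z m) N_le).
rewrite (sum_box_increment
  (fun m => cabs (Fcoef rho a m) * \prod_i cabs (z i) ^+ m i) N_le).
by apply: le_trans (ler_cabs_sum _ _ _) _; under eq_bigr do rewrite cabs_Fterm.
Qed.

Lemma Fabspartial_nondecreasing z : nondecreasing_seq (Fabspartial rho a z).
Proof.
move=> N N' N_le; rewrite -subr_ge0.
exact: le_trans (cabs_ge0 _) (cabs_Fpartial_increment_le z N_le).
Qed.

Lemma cvgn_Fpartial_part (f : R[i] -> R) z :
  {morph f : x y / x - y} -> (forall x, `|f x| <= cabs x) ->
  F_abs_conv rho a z -> cvgn (fun N => f (Fpartial rho a z N)).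
Proof.
move=> fB f_le [M FM]; apply: (cvgn_dominated_increments _ FM).
  exact: Fabspartial_nondecreasing.
move=> N N' N_le; rewrite -fB; apply: le_trans (f_le _) _.
exact: cabs_Fpartial_increment_le.
Qed.

Lemma cvg_cabs_Fpartial z : F_abs_conv rho a z ->
  (cabs (Fpartial rho a z N) @[N --> \oo] --> cabs (Fval rho a z))%classic.
Proof.
move=> Fz; have ReB : {morph @complex.Re R : x y / x - y} by move=> [? ?] [? ?].
have ImB : {morph @complex.Im R : x y / x - y} by move=> [? ?] [? ?].
have cvg_Re := cvgn_Fpartial_part ReB (@ler_norm_Re_cabs R) Fz.
have cvg_Im := cvgn_Fpartial_part ImB (@ler_norm_Im_cabs R) Fz.
apply: (continuous_cvg _ (@sqrt_continuous R _)).
by rewrite !expr2; apply: cvgD; apply: cvgM.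
Qed.

Lemma cabs_Fval_le z M : (forall N, Fabspartial rho a z N <= M) -> cabs (Fval rho a z) <= M.
Proof.
move=> FM; apply: (ler_cvg_to (cvg_cabs_Fpartial (ex_intro _ M FM)) (cvg_cst M)).
by apply: nearW => N; apply: le_trans (cabs_Fpartial_le _ _) (FM N).
Qed.

End PartialSums.

Lemma prodr_nat_bool (R : comPzSemiRingType) (I : finType) (P : pred I) :
  \prod_i ((P i)%:R : R) = [forall i, P i]%:R.
Proof.
case: (boolP [forall i, P i]) => [/forallP allP | /forallPn [i Pi]].
  by rewrite big1 // => i _; rewrite allP.
by rewrite (bigD1 i) //= (negbTE Pi) mul0r.
Qed.

Lemma sum_expr_prim_root (F : idomainType) (w : F) K d : K.-primitive_root w ->
  \sum_(t < K) (w ^+ d) ^+ t = K%:R * (K %| d)%:R.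
Proof.
move=> w_prim; case: (boolP (K %| d)%N) => [dvd_Kd | Ndvd_Kd].
  have -> : w ^+ d = 1 by apply/eqP; rewrite -(prim_order_dvd w_prim).
  by under eq_bigr do rewrite expr1n; rewrite sumr_const card_ord mulr1.
have wd_neq1 : w ^+ d != 1 by rewrite -(prim_order_dvd w_prim).
have wdK : (w ^+ d) ^+ K = 1 by rewrite -exprM mulnC exprM (prim_expr_order w_prim) expr1n.
have : (w ^+ d - 1) * \sum_(t < K) (w ^+ d) ^+ t = 0 by rewrite -subrX1 wdK subrr.
by move/eqP; rewrite mulf_eq0 subr_eq0 (negbTE wd_neq1) mulr0 => /eqP.
Qed.

(* For [m i < K], [aliases K m m'] says that [m' = m] modulo [K] coordinatewise. *)
Definition aliases r K (m m' : 'I_r -> nat) := [forall i, K %| m' i + (K - m i)]%N.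

Lemma aliases_ge r K (m m' : 'I_r -> nat) i :
  (m i < K)%N -> aliases K m m' -> m' i != m i -> (K <= m' i)%N.
Proof.
move=> m_lt /forallP /(_ i) /dvdnP [c mc] /eqP m_neq.
by case: c mc => [|[|c]] mc; rewrite ?mulSn in mc; lia.
Qed.

Lemma leq_idxsum r (m : 'I_r -> nat) i : (m i <= idxsum m)%N.
Proof. by rewrite /idxsum (bigD1 i) //= leq_addr. Qed.

Section RootsOfUnityAverage.
Variables (R : realType) (r : nat) (a : ('I_r -> nat) -> R[i]) (rho : R).

Lemma Fpartial_root_average (m : 'I_r -> nat) K (w : R[i]) (c : R) N :
  K.-primitive_root w ->
  \sum_(j : {ffun 'I_r -> 'I_K})
     Fpartial rho a (fun i => w ^+ j i * c%:C) N * \prod_i w ^+ (j i * (K - m i)) =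
  K%:R ^+ r * \sum_(m' : {ffun 'I_r -> 'I_N.+1})
     Fcoef rho a (natf m') * (c ^+ idxsum (natf m'))%:C * (aliases K m (natf m'))%:R.
Proof.
move=> w_prim; rewrite /Fpartial; under eq_bigr do rewrite mulr_suml.
rewrite exchange_big mulr_sumr /=; apply: eq_bigr => m' _.
have regroup (t e f : nat) :
    (w ^+ t * c%:C) ^+ e * w ^+ (t * f) = c%:C ^+ e * (w ^+ (e + f)) ^+ t.
  by rewrite exprMn -!exprM mulrAC -exprD mulrC -mulnDr mulnC.
under eq_bigr do rewrite -mulrA /mono -big_split /=.
under eq_bigr do under eq_bigr do rewrite regroup.
under eq_bigr do rewrite big_split /=.
rewrite -mulr_sumr -mulr_sumr.
rewrite -(bigA_distr_bigA (fun i (t : 'I_K) => (w ^+ (m' i + (K - m i))) ^+ t)) /=.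
have -> : \prod_i \sum_(t < K) (w ^+ (m' i + (K - m i))) ^+ t =
          \prod_i (K%:R * (K %| m' i + (K - m i))%:R).
  by apply: eq_bigr => i _; exact: sum_expr_prim_root.
rewrite big_split /= prodr_const card_ord prodr_nat_bool prodrXr rmorphXn /=.
by rewrite /idxsum /aliases; ring.
Qed.

End RootsOfUnityAverage.

Lemma cabs_prim_root (R : realType) K (w : R[i]) :
  (0 < K)%N -> K.-primitive_root w -> cabs w = 1.
Proof.
move=> K_gt0 w_prim; apply: complexI; rewrite cabsE; apply/eqP.
by rewrite -(pexpr_eq1 K_gt0) // -normrX (prim_expr_order w_prim) normr1.
Qed.

Section CauchyEstimate.
Variables (R : realType) (r : nat) (a : ('I_r -> nat) -> R[i]) (rho eps : R).
Hypotheses (rho_gt0 : 0 < rho) (eps_gt0 : 0 < eps).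
Hypothesis abs_conv : forall z : 'I_r -> R[i],
  (forall i, cabs (z i) <= rho^-1 + eps) -> F_abs_conv rho a z.
Local Notation q := (rho^-1 / (rho^-1 + eps)).

Let inv_rho_ge0 : 0 <= rho^-1. Proof. by rewrite invr_ge0 ltW. Qed.
Let radius_gt0 : 0 < rho^-1 + eps. Proof. by rewrite addr_gt0 ?invr_gt0. Qed.

Lemma Fabspartial_torus (eta : 'I_r -> R[i]) (c : R[i]) N : (forall i, cabs (eta i) = 1) ->
  Fabspartial rho a (fun i => eta i * c) N = Fabspartial rho a (fun=> c) N.
Proof.
move=> eta1; apply: eq_bigr => m _; congr (_ * _); apply: eq_bigr => i _.
by rewrite cabsM eta1 mul1r.
Qed.

Lemma cabs_Fval_le_Fnorm (eta : 'I_r -> R[i]) : (forall i, cabs (eta i) = 1) ->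
  cabs (Fval rho a (fun i => eta i * (rho^-1)%:C)) <= Fnorm rho a.
Proof.
have inv_rho_le : cabs (rho^-1)%:C <= rho^-1 + eps.
  by rewrite cabs_real ger0_norm // lerDl ltW.
have [M FM] := abs_conv (fun=> inv_rho_le).
have torus_le eta' : (forall i, cabs (eta' i) = 1) ->
    cabs (Fval rho a (fun i => eta' i * (rho^-1)%:C)) <= M.
  by move=> eta'1; apply: cabs_Fval_le => N; rewrite Fabspartial_torus.
move=> eta1; apply: ub_le_sup; last by exists eta.
by exists M => _ [eta' [eta'1 ->]]; exact: torus_le.
Qed.

Lemma q_ge0 : 0 <= q.
Proof. by rewrite divr_ge0 // ltW. Qed.

Lemma q_lt1 : q < 1.
Proof. by rewrite ltr_pdivrMr // mul1r ltrDl. Qed.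

Lemma alias_tail_le M K N (m0 : {ffun 'I_r -> 'I_N.+1}) :
    (forall N, Fabspartial rho a (fun=> (rho^-1 + eps)%:C) N <= M) ->
    (forall i, m0 i < K)%N ->
  cabs (\sum_(m' | m' != m0) Fcoef rho a (natf m') * ((rho^-1) ^+ idxsum (natf m'))%:C *
                             (aliases K (natf m0) (natf m'))%:R) <= M * q ^+ K.
Proof.
move=> FM m0_lt; have qK_ge0 := exprn_ge0 K q_ge0.
have term_ge0 (m' : {ffun 'I_r -> 'I_N.+1}) :
  0 <= cabs (Fcoef rho a (natf m')) * (rho^-1 + eps) ^+ idxsum (natf m').
  by rewrite mulr_ge0 ?cabs_ge0 // exprn_ge0 // ltW.
apply: le_trans (ler_cabs_sum _ _ _) _.
apply: le_trans (_ : \sum_(m' | m' != m0) q ^+ K *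
    (cabs (Fcoef rho a (natf m')) * (rho^-1 + eps) ^+ idxsum (natf m')) <= _); last first.
  rewrite -mulr_sumr mulrC ler_wpM2r //; apply: le_trans (FM N).
  have -> : Fabspartial rho a (fun=> (rho^-1 + eps)%:C) N =
      \sum_(m' : {ffun 'I_r -> 'I_N.+1})
        cabs (Fcoef rho a (natf m')) * (rho^-1 + eps) ^+ idxsum (natf m').
    by apply: eq_bigr => m' _; rewrite cabs_real ger0_norm ?prodrXr // ltW.
  by rewrite [leRHS](bigID (fun m' => m' != m0)) /= lerDl sumr_ge0.
apply: ler_sum => m' m'_neq; rewrite !cabsM cabs_nat cabs_real ger0_norm ?exprn_ge0 //.
case: (boolP (aliases K (natf m0) (natf m'))) => /= [al | _]; last first.
  by rewrite mulr0 mulr_ge0.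
have [i m'i_neq] : exists i, m' i != m0 i :> nat.
  apply/existsP; apply: contraR m'_neq => /existsPn eq_m0.
  by apply/eqP/ffunP => i; apply/val_inj/eqP; rewrite -[_ == _]negbK eq_m0.
have K_le : (K <= idxsum (natf m'))%N.
  rewrite /idxsum (bigD1 i) //=; apply: leq_trans (leq_addr _ _).
  exact: (@aliases_ge r K (natf m0) (natf m') i (m0_lt i) al m'i_neq).
have -> : rho^-1 ^+ idxsum (natf m') =
          q ^+ idxsum (natf m') * (rho^-1 + eps) ^+ idxsum (natf m').
  by rewrite -exprMn divfK // gt_eqF.
by rewrite mulr1 mulrCA ler_wpM2r // ler_wiXn2l ?q_ge0 ?(ltW q_lt1).
Qed.

Lemma Fcoef_scaled_le_partial M K N (w : R[i]) (m : 'I_r -> nat) :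
    (forall N, Fabspartial rho a (fun=> (rho^-1 + eps)%:C) N <= M) ->
    K.-primitive_root w -> (forall i, m i < K)%N -> (forall i, m i <= N)%N ->
  cabs (Fcoef rho a m) * rho^-1 ^+ idxsum m <=
  (K%:R ^+ r)^-1 * \sum_(j : {ffun 'I_r -> 'I_K})
                     cabs (Fpartial rho a (fun i => w ^+ j i * (rho^-1)%:C) N) + M * q ^+ K.
Proof.
move=> FM w_prim m_lt m_le.
have K_gt0 := prim_order_gt0 w_prim.
pose m0 : {ffun 'I_r -> 'I_N.+1} := [ffun i => inord (m i)].
have m0_lt i : (m0 i < K)%N by rewrite ffunE inordE m_le.
have m0E : natf m0 = m by apply: funext => i; rewrite ffunE inordE m_le.
pose A := \sum_(m' : {ffun 'I_r -> 'I_N.+1})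
  Fcoef rho a (natf m') * ((rho^-1) ^+ idxsum (natf m'))%:C * (aliases K m (natf m'))%:R.
have A_le : cabs A <= (K%:R ^+ r)^-1 * \sum_(j : {ffun 'I_r -> 'I_K})
                     cabs (Fpartial rho a (fun i => w ^+ j i * (rho^-1)%:C) N).
  rewrite ler_pdivlMl ?exprn_gt0 ?ltr0n //.
  rewrite -natrX -cabs_nat natrX -cabsM -(Fpartial_root_average a rho m (rho^-1) N w_prim).
  apply: le_trans (ler_cabs_sum _ _ _) (ler_sum _ _) => j _.
  rewrite cabsM cabs_prod big1 ?mulr1 // => i _.
  by rewrite cabsX (cabs_prim_root K_gt0 w_prim) expr1n.
have aliases_mm : aliases K m m by apply/forallP => i; rewrite subnKC ?dvdnn // ltnW.
have A_split : A = Fcoef rho a m * ((rho^-1) ^+ idxsum m)%:C +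
    \sum_(m' | m' != m0) Fcoef rho a (natf m') * ((rho^-1) ^+ idxsum (natf m'))%:C *
                         (aliases K (natf m0) (natf m'))%:R.
  by rewrite /A (bigD1 m0) //= m0E aliases_mm mulr1.
rewrite -[rho^-1 ^+ _]ger0_norm ?exprn_ge0 // -cabs_real -cabsM.
set bm := Fcoef rho a m * _; have -> : bm = A - (A - bm) by rewrite opprB addrC subrK.
apply: le_trans (ler_cabsD _ _) _; rewrite cabsN; apply: lerD => //.
by rewrite {1}A_split addrC addKr; exact: alias_tail_le.
Qed.

Lemma Fcoef_scaled_le M K (m : 'I_r -> nat) :
    (forall N, Fabspartial rho a (fun=> (rho^-1 + eps)%:C) N <= M) ->
    (0 < K)%N -> (forall i, m i < K)%N ->
  cabs (Fcoef rho a m) * rho^-1 ^+ idxsum m <= Fnorm rho a + M * q ^+ K.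
Proof.
move=> FM K_gt0 m_lt; have [w w_prim] := @closed_prim_root_exists R[i] K K_gt0.
have root_torus (j : {ffun 'I_r -> 'I_K}) i : cabs (w ^+ j i) = 1.
  by rewrite cabsX (cabs_prim_root K_gt0 w_prim) expr1n.
pose KR := (K%:R : R) ^+ r; have KR_gt0 : 0 < KR by rewrite exprn_gt0 ?ltr0n.
pose z (j : {ffun 'I_r -> 'I_K}) i := w ^+ j i * (rho^-1)%:C.
have Fz_cvg : (KR^-1 * \sum_j cabs (Fpartial rho a (z j) N) + M * q ^+ K @[N --> \oo] -->
               KR^-1 * \sum_j cabs (Fval rho a (z j)) + M * q ^+ K)%classic.
  apply: cvgD (cvg_cst _); apply: cvgM (cvg_cst _) _; apply: cvg_big => // [|j _].
    exact: add_continuous.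
  apply: cvg_cabs_Fpartial; apply: abs_conv => i.
  by rewrite cabsM root_torus mul1r cabs_real ger0_norm // lerDl ltW.
apply: le_trans (ler_cvg_to (cvg_cst _) Fz_cvg _) _.
  apply: filterS (nbhs_infty_ge (idxsum m)) => N m_le.
  exact: Fcoef_scaled_le_partial w_prim m_lt (fun i => leq_trans (leq_idxsum m i) m_le).
rewrite lerD2r ler_pdivrMl //.
apply: le_trans (ler_sum _ (fun j _ => cabs_Fval_le_Fnorm (root_torus j))) _.
by rewrite sumr_const card_ffun !card_ord -mulr_natr natrX mulrC.
Qed.

Lemma cauchy_estimate (m : 'I_r -> nat) :
  cabs (Fcoef rho a m) <= Fnorm rho a * rho ^+ idxsum m.
Proof.
have radius_le : cabs (rho^-1 + eps)%:C <= rho^-1 + eps.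
  by rewrite cabs_real ger0_norm // ltW.
have [M FM] := abs_conv (fun=> radius_le).
suff scaled_le : cabs (Fcoef rho a m) * rho^-1 ^+ idxsum m <= Fnorm rho a.
  rewrite -[leLHS]mulr1 -(expr1n _ (idxsum m)) -(mulVf (lt0r_neq0 rho_gt0)) exprMn mulrA.
  by rewrite ler_wpM2r // exprn_ge0 // ltW.
have geom_cvg : (Fnorm rho a + M * q ^+ K @[K --> \oo] --> Fnorm rho a)%classic.
  rewrite -[X in (_ --> X)%classic]addr0; apply: cvgD (cvg_cst _) _.
  by apply: cvg_geometric; rewrite ger0_norm ?q_ge0 ?q_lt1.
apply: (ler_cvg_to (cvg_cst _) geom_cvg); apply: filterS (nbhs_infty_ge (idxsum m).+1) => K.
move=> m_lt; apply: Fcoef_scaled_le FM (leq_trans (ltn0Sn _) m_lt) _ => i.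
exact: leq_ltn_trans (leq_idxsum m i) m_lt.
Qed.

End CauchyEstimate.

Lemma card_ord_le L n : (n <= L)%N -> #|[pred t : 'I_L.+1 | t <= n]%N| = n.+1.
Proof.
by move=> n_le; rewrite -sum1_card (big_ord_narrow_leq n_le) sum1_card card_ord.
Qed.

Lemma card_box r L (n : 'I_r -> nat) : (forall i, n i <= L)%N ->
  #|[pred k : {ffun 'I_r -> 'I_L.+1} | [forall i, k i <= n i]]%N| =
  (\prod_i (n i).+1)%N.
Proof.
move=> n_le.
rewrite (eq_card (B := family (fun i => [pred t : 'I_L.+1 | t <= n i]%N))) //.
by rewrite card_family foldrE big_image; apply: eq_bigr => i _; exact: card_ord_le.
Qed.

Theorem mainTheorem8 (R : realType) (r : nat) (hr : (1 <= r)%N)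
  (a : ('I_r -> nat) -> R[i]) (rho : R) (hrho : 0 < rho)
  (heps : exists eps : R, 0 < eps /\
     forall z : 'I_r -> R[i], (forall i, cabs (z i) <= rho^-1 + eps) ->
       F_abs_conv rho a z) :
  forall n : 'I_r -> nat,
    cabs (a n) <= (\prod_i (n i).+1)%:R * Fnorm rho a * rho ^+ idxsum n.
Proof.
move=> n; have [eps [eps_gt0 abs_conv]] := heps.
have n_le := leq_idxsum n; rewrite (Fcoef_inversion n_le a rho).
apply: le_trans (ler_cabs_sum _ _ _) _.
apply: le_trans (_ : \sum_(k | below n k) Fnorm rho a * rho ^+ idxsum n <= _).
  apply: ler_sum => k /forallP k_le; rewrite cabsM cabsX cabs_real ger0_norm ?(ltW hrho) //.
  apply: le_trans (ler_wpM2l (exprn_ge0 _ (ltW hrho))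
                             (cauchy_estimate hrho eps_gt0 abs_conv _)) _.
  by rewrite mulrCA -exprD subnK // leq_sum.
by rewrite sumr_const card_box // mulr_natl mulrnAl.
Qed.
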